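(* Let $\alpha: I\subset\mathbb{R}\to\mathbb{R}^3_1$ be a semi-real spatial quaternionic curve, parametrized by pseudo arc length $s$, with a spacelike or timelike rectifying plane, curvature $k(s)>0$ and torsion $r(s)$. Then $\alpha$ is (congruent to) a semi-real spatial quaternionic rectifying curve if and only if $\frac{r(s)}{k(s)}=c_1 s+c_2$ for some $c_1,c_2\in\mathbb{R}$ with $c_1\neq 0$.
   Context: $\mathbb{R}^3_1$ is the semi-Euclidean (Minkowski) 3-space, identified with the space of semi-real spatial quaternions $q=q_1\mathbf{e}_1+q_2\mathbf{e}_2+q_3\mathbf{e}_3$, with inner product $h(p,q)=p_1q_1+p_2q_2-p_3q_3$. Pseudo arc length $s$ means $|h(\alpha',\alpha')|=1$. The non-null Frenet frame $\{\mathbf{t},\mathbf{n}_1,\mathbf{n}_2\}$ with $h(\mathbf{t},\mathbf{t})=\varepsilon_t$, $h(\mathbf{n}_1,\mathbf{n}_1)=\varepsilon_{n_1}$, $h(\mathbf{n}_2,\mathbf{n}_2)=\varepsilon_{n_2}$ ($\varepsilon\in\{\pm1\}$) satisfies $\mathbf{t}'=\varepsilon_{n_1}k\mathbf{n}_1$, $\mathbf{n}_1'=-\varepsilon_t k\mathbf{t}+\varepsilon_{n_1}r\mathbf{n}_2$, $\mathbf{n}_2'=-\varepsilon_{n_2}r\mathbf{n}_1$. The rectifying plane is the plane spanned by $\mathbf{t}$ and $\mathbf{n}_2$. A rectifying curve is one with $\alpha(s)=\lambda(s)\mathbf{t}(s)+\mu(s)\mathbf{n}_2(s)$ for some differentiable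 functions $\lambda,\mu$; congruent means equal up to a rigid motion (here a translation) of $\mathbb{R}^3_1$. *)

From Stdlib Require Import Reals.
From Coquelicot Require Import Coquelicot.
Open Scope R_scope.

(* Points/vectors of the semi-Euclidean space R^3_1, identified with
   semi-real spatial quaternions q = q1 e1 + q2 e2 + q3 e3. *)
Record vec3 := V3 { q1 : R ; q2 : R ; q3 : R }.

Definition vadd (p q : vec3) : vec3 := V3 (q1 p + q1 q) (q2 p + q2 q) (q3 p + q3 q).
Definition vsub (p q : vec3) : vec3 := V3 (q1 p - q1 q) (q2 p - q2 q) (q3 p - q3 q).
Definition vscal (a : R) (p : vec3) : vec3 := V3 (a * q1 p) (a * q2 p) (a * q3 p).

Definition h (p q : vec3) : R := q1 p * q1 q + q2 p * q2 q - q3 p * q3 q.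

Definition vderive (f : R -> vec3) (s : R) (v : vec3) : Prop :=
  is_derive (fun u => q1 (f u)) s (q1 v) /\
  is_derive (fun u => q2 (f u)) s (q2 v) /\
  is_derive (fun u => q3 (f u)) s (q3 v).

Definition in_I (a b : Rbar) (s : R) : Prop := Rbar_lt a s /\ Rbar_lt s b.

Definition is_sign (e : R) : Prop := e = 1 \/ e = -1.

Definition rectifying_on (a b : Rbar) (alpha t n2 : R -> vec3) : Prop :=
  exists lam mu : R -> R,
    forall s, in_I a b s ->
      ex_derive lam s /\ ex_derive mu s /\
      alpha s = vadd (vscal (lam s) (t s)) (vscal (mu s) (n2 s)).

(* alpha is congruent (up to a translation, a rigid motion of R^3_1)
   to a rectifying curve: alpha - c is rectifying for some constant c. *)
Definition congruent_to_rectifying (a b : Rbar) (alpha t n2 : R -> vec3) : Prop :=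
  exists c : vec3, rectifying_on a b (fun s => vsub (alpha s) c) t n2.

(* Differentiating alpha - c = lam t + mu n2 with the Frenet equations and comparing
   coefficients in the non-null frame gives lam' = 1, mu' = 0 and
   en1 lam k = en2 mu r.  Hence lam = s + const, mu is a nonzero constant, and r/k is
   affine in s.  Conversely, if r/k = c1 s + c2 then lam = s + c2/c1, mu = en1 en2/c1
   make alpha - (lam t + mu n2) have zero derivative, so it is a constant c. *)
From Stdlib Require Import Reals Lra.
From Coquelicot Require Import Coquelicot.
Open Scope R_scope.

Lemma vec3_ext (p q : vec3) :
  q1 p = q1 q -> q2 p = q2 q -> q3 p = q3 q -> p = q.
Proof. destruct p, q; simpl; intros -> -> ->; reflexivity. Qed.

Lemma h_sym (p q : vec3) : h p q = h q p.
Proof. unfold h; ring. Qed.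

Definition frame_comb (x y z : R) (t n1 n2 : vec3) : vec3 :=
  vadd (vadd (vscal x t) (vscal y n1)) (vscal z n2).

Lemma h_frame_comb (p t n1 n2 : vec3) x y z :
  h p (frame_comb x y z t n1 n2) = x * h p t + y * h p n1 + z * h p n2.
Proof. destruct p, t, n1, n2; unfold h, frame_comb; simpl; ring. Qed.

Lemma frame_comb_unit_t (t n1 n2 : vec3) : frame_comb 1 0 0 t n1 n2 = t.
Proof. apply vec3_ext; unfold frame_comb; simpl; ring. Qed.

Lemma frame_comb_inj (t n1 n2 : vec3) (et en1 en2 x y z x' y' z' : R) :
  et <> 0 -> en1 <> 0 -> en2 <> 0 ->
  h t t = et -> h n1 n1 = en1 -> h n2 n2 = en2 ->
  h t n1 = 0 -> h t n2 = 0 -> h n1 n2 = 0 ->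
  frame_comb x y z t n1 n2 = frame_comb x' y' z' t n1 n2 ->
  x = x' /\ y = y' /\ z = z'.
Proof.
  intros Het Hen1 Hen2 Htt Hn1n1 Hn2n2 Htn1 Htn2 Hn1n2 E.
  assert (Et := f_equal (h t) E). assert (En1 := f_equal (h n1) E).
  assert (En2 := f_equal (h n2) E).
  rewrite !h_frame_comb in Et, En1, En2.
  rewrite (h_sym n1 t), (h_sym n2 t), (h_sym n2 n1) in *.
  rewrite Htt, Hn1n1, Hn2n2, Htn1, Htn2, Hn1n2 in *.
  split; [|split].
  - apply (Rmult_eq_reg_r et); [lra | exact Het].
  - apply (Rmult_eq_reg_r en1); [lra | exact Hen1].
  - apply (Rmult_eq_reg_r en2); [lra | exact Hen2].
Qed.

Lemma is_sign_neq0 e : is_sign e -> e <> 0.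
Proof. intros [-> | ->]; lra. Qed.

Lemma is_sign_sqr e : is_sign e -> e * e = 1.
Proof. intros [-> | ->]; ring. Qed.

Lemma ratio_of_frame_relation (en1 en2 k r l m : R) :
  en2 * en2 = 1 -> m <> 0 -> k <> 0 -> l * en1 * k - m * en2 * r = 0 ->
  r / k = en1 * en2 / m * l.
Proof.
  intros He Hm Hk H.
  assert (Hr : r = l * en1 * en2 * k / m).
  { apply (Rmult_eq_reg_l m); [|exact Hm].
    transitivity (m * en2 * r * en2).
    - replace (m * en2 * r * en2) with (m * r * (en2 * en2)) by ring; rewrite He; ring.
    - replace (m * en2 * r) with (l * en1 * k) by lra.
      field; exact Hm. }
  rewrite Hr; field; auto.
Qed.

Lemma vderive_plus f g s u v :
  vderive f s u -> vderive g s v -> vderive (fun x => vadd (f x) (g x)) s (vadd u v).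
Proof.
  intros (F1 & F2 & F3) (G1 & G2 & G3); split; [|split]; simpl.
  - apply (is_derive_plus (fun x => q1 (f x)) (fun x => q1 (g x))); assumption.
  - apply (is_derive_plus (fun x => q2 (f x)) (fun x => q2 (g x))); assumption.
  - apply (is_derive_plus (fun x => q3 (f x)) (fun x => q3 (g x))); assumption.
Qed.

Lemma vderive_minus f g s u v :
  vderive f s u -> vderive g s v -> vderive (fun x => vsub (f x) (g x)) s (vsub u v).
Proof.
  intros (F1 & F2 & F3) (G1 & G2 & G3); split; [|split]; simpl.
  - apply (is_derive_minus (fun x => q1 (f x)) (fun x => q1 (g x))); assumption.
  - apply (is_derive_minus (fun x => q2 (f x)) (fun x => q2 (g x))); assumption.
  - apply (is_derive_minus (fun x => q3 (f x)) (fun x => q3 (g x))); assumption.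
Qed.

Lemma vderive_const (c : vec3) s : vderive (fun _ => c) s (V3 0 0 0).
Proof. split; [|split]; simpl; apply (is_derive_const (V := R_NormedModule)). Qed.

Lemma vderive_scal (l : R -> R) f s dl v :
  is_derive l s dl -> vderive f s v ->
  vderive (fun x => vscal (l x) (f x)) s (vadd (vscal dl (f s)) (vscal (l s) v)).
Proof.
  intros L (F1 & F2 & F3); split; [|split]; simpl.
  - apply (is_derive_mult l (fun x => q1 (f x))); auto; exact Rmult_comm.
  - apply (is_derive_mult l (fun x => q2 (f x))); auto; exact Rmult_comm.
  - apply (is_derive_mult l (fun x => q3 (f x))); auto; exact Rmult_comm.
Qed.

Lemma vderive_unique f s u v : vderive f s u -> vderive f s v -> u = v.
Proof.
  intros (U1 & U2 & U3) (V1 & V2 & V3).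
  apply vec3_ext.
  - rewrite <- (is_derive_unique _ _ _ U1); exact (is_derive_unique _ _ _ V1).
  - rewrite <- (is_derive_unique _ _ _ U2); exact (is_derive_unique _ _ _ V2).
  - rewrite <- (is_derive_unique _ _ _ U3); exact (is_derive_unique _ _ _ V3).
Qed.

Lemma vderive_ext_loc f g s v :
  locally s (fun x => f x = g x) -> vderive f s v -> vderive g s v.
Proof.
  intros E (F1 & F2 & F3).
  split; [|split]; (eapply is_derive_ext_loc; [|eassumption]);
    (eapply filter_imp; [|exact E]); intros x ->; reflexivity.
Qed.

Lemma in_I_locally a b s : in_I a b s -> locally s (in_I a b).
Proof.
  apply (@open_and R_UniformSpace (fun u => Rbar_lt a u) (fun u => Rbar_lt u b)).
  - apply open_Rbar_gt.
  - apply open_Rbar_lt.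
Qed.

Lemma in_I_nonempty a b : Rbar_lt a b -> exists s, in_I a b s.
Proof.
  destruct a as [a| |], b as [b| |]; simpl; intros H; try contradiction.
  - exists ((a + b) / 2); unfold in_I; simpl; lra.
  - exists (a + 1); unfold in_I; simpl; split; auto; lra.
  - exists (b - 1); unfold in_I; simpl; split; auto; lra.
  - exists 0; unfold in_I; simpl; split; auto.
Qed.

Lemma in_I_convex a b x y z : in_I a b x -> in_I a b y -> x <= z <= y -> in_I a b z.
Proof. unfold in_I; destruct a as [a| |], b as [b| |]; simpl; intros; lra. Qed.

Lemma is_derive_zero_const_on_I a b (f : R -> R) :
  (forall s, in_I a b s -> is_derive f s 0) ->
  forall x y, in_I a b x -> in_I a b y -> f x = f y.
Proof.
  intros Hd.
  assert (Hle : forall x y, x <= y -> in_I a b x -> in_I a b y -> f x = f y).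
  { intros x y Hxy Hx Hy.
    assert (Hxy' : forall z, Rmin x y <= z <= Rmax x y -> in_I a b z).
    { intros z Hz; rewrite Rmin_left, Rmax_right in Hz by lra.
      exact (in_I_convex a b x y z Hx Hy Hz). }
    destruct (MVT_gen f x y (fun _ => 0)) as [c [_ Hc]].
    - intros z Hz; apply Hd, Hxy'; lra.
    - intros z Hz; apply continuity_pt_filterlim.
      apply (ex_derive_continuous f); exists 0; apply Hd, Hxy'; exact Hz.
    - lra. }
  intros x y Hx Hy; destruct (Rle_dec x y).
  - apply Hle; auto.
  - symmetry; apply Hle; auto; lra.
Qed.

Lemma is_derive_one_on_I a b (f : R -> R) :
  (forall s, in_I a b s -> is_derive f s 1) ->
  forall x y, in_I a b x -> in_I a b y -> f x - x = f y - y.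
Proof.
  intros Hd; apply (is_derive_zero_const_on_I a b (fun u => f u - u)).
  intros s Hs; replace 0 with (1 - 1) by ring.
  apply (is_derive_minus f (fun u => u)); [apply Hd, Hs | apply (is_derive_id (K := R_AbsRing))].
Qed.

Lemma vderive_zero_const_on_I a b (f : R -> vec3) :
  (forall s, in_I a b s -> vderive f s (V3 0 0 0)) ->
  forall x y, in_I a b x -> in_I a b y -> f x = f y.
Proof.
  intros Hd x y Hx Hy.
  apply vec3_ext.
  - apply (is_derive_zero_const_on_I a b (fun u => q1 (f u))); auto; apply Hd.
  - apply (is_derive_zero_const_on_I a b (fun u => q2 (f u))); auto; apply Hd.
  - apply (is_derive_zero_const_on_I a b (fun u => q3 (f u))); auto; apply Hd.
Qed.

Section Rectifying.

Variables (a b : Rbar) (alpha t n1 n2 : R -> vec3) (k r : R -> R) (et en1 en2 : R).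
Hypotheses (Hab : Rbar_lt a b)
  (Het : is_sign et) (Hen1 : is_sign en1) (Hen2 : is_sign en2)
  (Halpha : forall s, in_I a b s -> vderive alpha s (t s))
  (Htt : forall s, in_I a b s -> h (t s) (t s) = et)
  (Hn1n1 : forall s, in_I a b s -> h (n1 s) (n1 s) = en1)
  (Hn2n2 : forall s, in_I a b s -> h (n2 s) (n2 s) = en2)
  (Htn1 : forall s, in_I a b s -> h (t s) (n1 s) = 0)
  (Htn2 : forall s, in_I a b s -> h (t s) (n2 s) = 0)
  (Hn1n2 : forall s, in_I a b s -> h (n1 s) (n2 s) = 0)
  (Ft : forall s, in_I a b s -> vderive t s (vscal (en1 * k s) (n1 s)))
  (Fn2 : forall s, in_I a b s -> vderive n2 s (vscal (- (en2 * r s)) (n1 s)))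
  (Hk : forall s, in_I a b s -> 0 < k s).

Lemma vderive_rectifying_comb (lam mu : R -> R) s dl dm :
  in_I a b s -> is_derive lam s dl -> is_derive mu s dm ->
  vderive (fun u => vadd (vscal (lam u) (t u)) (vscal (mu u) (n2 u))) s
    (frame_comb dl (lam s * en1 * k s - mu s * en2 * r s) dm (t s) (n1 s) (n2 s)).
Proof.
  intros Hs Hl Hm.
  replace (frame_comb _ _ _ _ _ _) with
    (vadd (vadd (vscal dl (t s)) (vscal (lam s) (vscal (en1 * k s) (n1 s))))
          (vadd (vscal dm (n2 s)) (vscal (mu s) (vscal (- (en2 * r s)) (n1 s))))).
  - apply vderive_plus; apply vderive_scal; auto.
  - apply vec3_ext; unfold frame_comb; simpl; ring.
Qed.

Lemma rectifying_frame_coeffs (c : vec3) (lam mu : R -> R) :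
  (forall u, in_I a b u -> ex_derive lam u /\ ex_derive mu u /\
     vsub (alpha u) c = vadd (vscal (lam u) (t u)) (vscal (mu u) (n2 u))) ->
  forall s, in_I a b s ->
    is_derive lam s 1 /\ lam s * en1 * k s - mu s * en2 * r s = 0 /\ is_derive mu s 0.
Proof.
  intros Hrec s Hs.
  destruct (Hrec s Hs) as (Hl & Hm & _).
  assert (Hbeta : vderive (fun u => vsub (alpha u) c) s (t s)).
  { pose proof (vderive_minus alpha (fun _ => c) s _ _ (Halpha s Hs) (vderive_const c s))
      as Hd.
    replace (vsub (t s) (V3 0 0 0)) with (t s) in Hd by (apply vec3_ext; simpl; ring).
    exact Hd. }
  assert (Hloc : locally s (fun u => vadd (vscal (lam u) (t u)) (vscal (mu u) (n2 u))
                                  = vsub (alpha u) c)).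
  { eapply filter_imp; [|exact (in_I_locally a b s Hs)]; intros u Hu.
    symmetry; apply Hrec, Hu. }
  pose proof (vderive_ext_loc _ _ _ _ Hloc
    (vderive_rectifying_comb lam mu s _ _ Hs (Derive_correct _ _ Hl) (Derive_correct _ _ Hm)))
    as Hcomb.
  pose proof (vderive_unique _ _ _ _ Hbeta Hcomb) as E.
  rewrite <- (frame_comb_unit_t (t s) (n1 s) (n2 s)) in E at 1.
  destruct (frame_comb_inj (t s) (n1 s) (n2 s) et en1 en2 _ _ _ _ _ _
    (is_sign_neq0 _ Het) (is_sign_neq0 _ Hen1) (is_sign_neq0 _ Hen2)
    (Htt s Hs) (Hn1n1 s Hs) (Hn2n2 s Hs) (Htn1 s Hs) (Htn2 s Hs) (Hn1n2 s Hs) E)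
    as (E1 & E2 & E3).
  split; [|split]; auto.
  - rewrite E1; apply Derive_correct, Hl.
  - rewrite E3; apply Derive_correct, Hm.
Qed.

Lemma ratio_affine_of_rectifying :
  congruent_to_rectifying a b alpha t n2 ->
  exists c1 c2 : R, c1 <> 0 /\ forall s, in_I a b s -> r s / k s = c1 * s + c2.
Proof.
  intros (c & lam & mu & Hrec).
  destruct (in_I_nonempty a b Hab) as [s0 Hs0].
  pose proof (rectifying_frame_coeffs c lam mu Hrec) as Hcoef.
  assert (Hlam : forall s, in_I a b s -> lam s = s + (lam s0 - s0)).
  { intros s Hs.
    enough (lam s - s = lam s0 - s0) by lra.
    apply (is_derive_one_on_I a b); auto; apply Hcoef. }
  assert (Hmu : forall s, in_I a b s -> mu s = mu s0).
  { intros s Hs; apply (is_derive_zero_const_on_I a b mu); auto; apply Hcoef. }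
  assert (Hmu0 : mu s0 <> 0).
  { intros Z.
    (* otherwise lam en1 k = 0, so lam vanishes on I, contradicting lam' = 1 *)
    assert (Hlam0 : forall s, in_I a b s -> lam s = 0).
    { intros s Hs; destruct (Hcoef s Hs) as (_ & H & _).
      rewrite Hmu, Z in H by exact Hs.
      assert (Hen1k : en1 * k s <> 0)
        by (apply Rmult_integral_contrapositive_currified;
            [apply is_sign_neq0, Hen1 | apply Rgt_not_eq, Hk, Hs]).
      apply (Rmult_eq_reg_r (en1 * k s)); [lra | exact Hen1k]. }
    assert (H0 : is_derive lam s0 0).
    { apply (is_derive_ext_loc (fun _ => 0)); [|apply (is_derive_const (V := R_NormedModule))].
      eapply filter_imp; [|exact (in_I_locally a b s0 Hs0)]; intros u Hu; symmetry; auto. }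
    destruct (Hcoef s0 Hs0) as (H1 & _).
    apply is_derive_unique in H0; apply is_derive_unique in H1; lra. }
  exists (en1 * en2 / mu s0), ((lam s0 - s0) * en1 * en2 / mu s0); split.
  - apply Rmult_integral_contrapositive_currified;
      [apply Rmult_integral_contrapositive_currified; apply is_sign_neq0; assumption
      | apply Rinv_neq_0_compat, Hmu0].
  - intros s Hs; destruct (Hcoef s Hs) as (_ & H & _).
    rewrite Hmu in H by exact Hs.
    pose proof (Hk s Hs) as Hks.
    rewrite (ratio_of_frame_relation en1 en2 (k s) (r s) (lam s) (mu s0)), (Hlam s Hs);
      [field | apply is_sign_sqr | | lra | ]; assumption.
Qed.

Lemma rectifying_of_ratio_affine (c1 c2 : R) :
  c1 <> 0 -> (forall s, in_I a b s -> r s / k s = c1 * s + c2) ->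
  congruent_to_rectifying a b alpha t n2.
Proof.
  intros Hc1 Hratio.
  destruct (in_I_nonempty a b Hab) as [s0 Hs0].
  set (lam := fun u => u + c2 / c1).
  set (mu := fun _ : R => en1 * en2 / c1).
  set (beta := fun u => vsub (alpha u) (vadd (vscal (lam u) (t u)) (vscal (mu u) (n2 u)))).
  assert (Hbeta : forall s, in_I a b s -> vderive beta s (V3 0 0 0)).
  { intros s Hs.
    assert (Hcoef : lam s * en1 * k s - mu s * en2 * r s = 0).
    { pose proof (Hk s Hs) as Hks.
      assert (Hr : r s = k s * (c1 * s + c2))
        by (rewrite <- (Hratio s Hs); field; lra).
      rewrite Hr; unfold lam, mu.
      replace (en1 * en2 / c1 * en2) with (en1 * (en2 * en2) / c1) by (field; exact Hc1).
      rewrite (is_sign_sqr _ Hen2); field; exact Hc1. }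
    assert (Hl : is_derive lam s 1) by (unfold lam; auto_derive; auto; ring).
    assert (Hm : is_derive mu s 0) by apply (is_derive_const (V := R_NormedModule)).
    pose proof (vderive_minus _ _ s _ _ (Halpha s Hs)
      (vderive_rectifying_comb lam mu s 1 0 Hs Hl Hm)) as Hd.
    rewrite Hcoef, frame_comb_unit_t in Hd.
    replace (V3 0 0 0) with (vsub (t s) (t s)) by (apply vec3_ext; simpl; ring).
    exact Hd. }
  exists (beta s0), lam, mu; intros s Hs; split; [|split].
  - unfold lam; auto_derive; auto.
  - unfold mu; auto_derive; auto.
  - rewrite <- (vderive_zero_const_on_I a b beta Hbeta s s0 Hs Hs0).
    apply vec3_ext; unfold beta; simpl; ring.
Qed.

End Rectifying.

Theorem theorem3p3
  (a b : Rbar) (Hab : Rbar_lt a b)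
  (alpha t n1 n2 : R -> vec3) (k r : R -> R) (et en1 en2 : R)
  (Het : is_sign et) (Hen1 : is_sign en1) (Hen2 : is_sign en2)
  (* pseudo arc length parametrization: alpha' = t with h(t,t) = et = +-1 *)
  (Halpha : forall s, in_I a b s -> vderive alpha s (t s))
  (* non-null Frenet frame, orthonormal w.r.t. h *)
  (Htt : forall s, in_I a b s -> h (t s) (t s) = et)
  (Hn1n1 : forall s, in_I a b s -> h (n1 s) (n1 s) = en1)
  (Hn2n2 : forall s, in_I a b s -> h (n2 s) (n2 s) = en2)
  (Htn1 : forall s, in_I a b s -> h (t s) (n1 s) = 0)
  (Htn2 : forall s, in_I a b s -> h (t s) (n2 s) = 0)
  (Hn1n2 : forall s, in_I a b s -> h (n1 s) (n2 s) = 0)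
  (* Frenet equations *)
  (Ft : forall s, in_I a b s -> vderive t s (vscal (en1 * k s) (n1 s)))
  (Fn1 : forall s, in_I a b s ->
     vderive n1 s (vadd (vscal (- (et * k s)) (t s)) (vscal (en1 * r s) (n2 s))))
  (Fn2 : forall s, in_I a b s -> vderive n2 s (vscal (- (en2 * r s)) (n1 s)))
  (* positive curvature *)
  (Hk : forall s, in_I a b s -> 0 < k s)
  (* rectifying plane span{t, n2} is spacelike or timelike *)
  (Hplane : (et = 1 /\ en2 = 1) \/ et * en2 = -1) :
  congruent_to_rectifying a b alpha t n2 <->
  exists c1 c2 : R, c1 <> 0 /\
    forall s, in_I a b s -> r s / k s = c1 * s + c2.
Proof.
  split.
  - apply ratio_affine_of_rectifying
      with (n1 := n1) (et := et) (en1 := en1) (en2 := en2); assumption.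
  - intros (c1 & c2 & Hc1 & Hratio).
    apply rectifying_of_ratio_affine
      with (n1 := n1) (k := k) (r := r) (en1 := en1) (en2 := en2) (c1 := c1) (c2 := c2);
      assumption.
Qed.
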